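(* Let $q$ be a prime power and $u\in\mathbb F_{q^3}\setminus\mathbb F_q$. Then the $\mathbb F_q$-subspace $$U=\{(\alpha_0+\alpha_1u,\ \alpha_2+\alpha_3u,\ \alpha_4+\alpha_5u,\ \alpha_6+\alpha_7u) : \alpha_i\in\mathbb F_q\}\subseteq\mathbb F_{q^3}^4$$ is a cutting $[8,4]_{q^3/q}$ system.
   Context: An $[n,k]_{q^m/q}$ system is an $\mathbb F_q$-subspace $U$ of $\mathbb F_{q^m}^k$ with $\dim_{\mathbb F_q}(U)=n$ and $\langle U\rangle_{\mathbb F_{q^m}}=\mathbb F_{q^m}^k$. It is cutting if for every $\mathbb F_{q^m}$-hyperplane $H$ of $\mathbb F_{q^m}^k$ one has $\langle H\cap U\rangle_{\mathbb F_{q^m}}=H$. *)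

From HB Require Import structures.
From mathcomp Require Import all_boot all_order all_algebra all_field.
Set Implicit Arguments. Unset Strict Implicit. Unset Printing Implicit Defensive.
Import GRing.Theory.
Local Open Scope ring_scope.

(* Vectors of F_{q^m}^k are finite functions 'I_k -> L, where L is a
   field extension of F (= F_q).  {ffun 'I_k -> L} is canonically a
   vectType F (pointwise F-scaling), so F-subspaces are {vspace _}. *)

Section Defs.
Variables (F : fieldType) (L : fieldExtType F) (k : nat).

Definition vecL := {ffun 'I_k -> L}.

Definition Lspan (S : {pred vecL}) (w : vecL) : Prop :=
  exists n (c : 'I_n -> L) (s : 'I_n -> vecL),
    (forall j, s j \in S) /\ w = \sum_(j < n) [ffun i => c j * s j i].

Definition hyperplane (a : vecL) : {pred vecL} :=
  [pred v : vecL | \sum_(i < k) a i * v i == 0].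

Definition is_system (n : nat) (U : {vspace vecL}) : Prop :=
  \dim U = n /\ forall w : vecL, Lspan (mem U) w.

Definition cutting (U : {vspace vecL}) : Prop :=
  forall a : vecL, a != 0 ->
    forall w : vecL,
      Lspan [pred v | (v \in U) && (v \in hyperplane a)] w <-> w \in hyperplane a.
End Defs.

(* The 8 generators: alpha_{2i} goes with 1 in coordinate i,
   alpha_{2i+1} with u in coordinate i. *)
Definition gen8 (F : fieldType) (L : fieldExtType F) (u : L) (j : 'I_8) : vecL L 4 :=
  [ffun i : 'I_4 => if (i == j./2 :> nat) then (if odd j then u else 1) else 0].

Definition U8 (F : fieldType) (L : fieldExtType F) (u : L) : {vspace vecL L 4} :=
  <<[seq gen8 u j | j <- enum 'I_8]>>%VS.

(* If a_p != 0, the hyperplane a.v = 0 is spanned over L by the vectors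
   e_j - c_j e_p with c_j = a_j / a_p.  The multiple y (e_j - c_j e_p) lies
   in U as soon as y and c_j y both lie in the F-span <1, u>, and a nonzero
   such y exists because the 2-dimensional F-subspaces <1, u> and
   c_j^-1 <1, u> of the 3-dimensional F-space L meet nontrivially. *)

From HB Require Import structures.
From mathcomp Require Import all_boot all_order all_algebra all_field.
From mathcomp Require Import ring zify.
Set Implicit Arguments. Unset Strict Implicit. Unset Printing Implicit Defensive.
Import GRing.Theory.
Local Open Scope ring_scope.

Section Coordinates.
Variables (F : fieldType) (L : fieldExtType F) (k : nat).
Implicit Types (a v w : vecL L k) (S : {pred vecL L k}).

Definition coordv (i : 'I_k) (x : L) : vecL L k := [ffun j => if j == i then x else 0].

Lemma coordv_is_linear i : linear (coordv i).
Proof.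
by move=> c x y; apply/ffunP=> j; rewrite !ffunE; case: eqP; rewrite ?scaler0 ?addr0.
Qed.
HB.instance Definition _ i :=
  GRing.isLinear.Build F L (vecL L k) *:%R (coordv i) (coordv_is_linear i).

Lemma mulr_coordv c i x j : c * coordv i x j = coordv i (c * x) j.
Proof. by rewrite !ffunE; case: eqP; rewrite ?mulr0. Qed.

Lemma sum_coordv v : \sum_i coordv i (v i) = v.
Proof.
apply/ffunP=> j; rewrite sum_ffunE (bigD1 j) //= big1 => [|i /negbTE ij].
  by rewrite !ffunE eqxx addr0.
by rewrite ffunE eq_sym ij.
Qed.

Lemma dot_coordv a i x : \sum_j a j * coordv i x j = a i * x.
Proof.
rewrite (bigD1 i) //= big1 ?addr0 => [|j /negbTE ji]; first by rewrite ffunE eqxx.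
by rewrite ffunE ji mulr0.
Qed.

Lemma hyperplane_Lspan a S w :
  {subset S <= hyperplane a} -> Lspan S w -> w \in hyperplane a.
Proof.
move=> SH [n [c [s [Ss ->]]]]; rewrite inE.
under eq_bigr => i _ do rewrite sum_ffunE big_distrr.
rewrite exchange_big big1 //= => j _.
under eq_bigr => i _ do rewrite ffunE mulrCA.
have := SH _ (Ss j); rewrite inE => /eqP.
by rewrite -mulr_sumr => ->; rewrite mulr0.
Qed.

Lemma Lspan_coordv1 S w : (forall i, coordv i 1 \in S) -> Lspan S w.
Proof.
move=> S1; exists k, w, (coordv^~ 1); split=> //.
rewrite -[LHS]sum_coordv; apply: eq_bigr => i _.
by apply/ffunP=> j; rewrite [RHS]ffunE mulr_coordv mulr1.
Qed.

Lemma cutting_coordv (U : {vspace vecL L k}) (V : {vspace L}) :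
    (forall i x, x \in V -> coordv i x \in U) ->
    (forall c : L, exists y, [&& y \in V, y != 0 & c * y \in V]) ->
  cutting U.
Proof.
move=> VU Vmul a a0 w; split; first by apply: hyperplane_Lspan => v /andP[].
rewrite inE => /eqP aw0.
have [p ap0] : exists p, a p != 0.
  apply/existsP; apply: contraNT a0 => /existsPn a_0.
  by apply/eqP/ffunP=> i; rewrite ffunE; apply/eqP/negPn/a_0.
pose b j := - (a j / a p).
pose y j := xchoose (Vmul (b j)).
have /all_and3[Vy y0 Vby] : forall j, [/\ y j \in V, y j != 0 & b j * y j \in V].
  by move=> j; apply/and3P; exact: (xchooseP (Vmul (b j))).
exists k, (fun j => w j / y j), (fun j => coordv j (y j) + coordv p (b j * y j)).
split=> [j|].
  rewrite !inE memvD ?VU //=.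
  under eq_bigr do rewrite ffunE mulrDr.
  by rewrite big_split /= !dot_coordv /b; apply/eqP; field.
have bw0 : \sum_j b j * w j = 0.
  by under eq_bigr do rewrite mulNr mulrAC; rewrite sumrN -mulr_suml aw0 mul0r oppr0.
transitivity (\sum_j (coordv j (w j) + coordv p (b j * w j))).
  by rewrite big_split /= sum_coordv -linear_sum bw0 linear0 addr0.
apply: eq_bigr => j _; apply/ffunP=> i.
by rewrite [RHS]ffunE [LHS]ffunE [in RHS]ffunE mulrDr !mulr_coordv divfK // mulrCA divfK.
Qed.

End Coordinates.

Definition ord_double n (i : 'I_n) : 'I_n.*2 := Ordinal (etrans (ltn_double i n) (ltn_ord i)).
Definition ord_Sdouble n (i : 'I_n) : 'I_n.*2 :=
  Ordinal (etrans (ltn_Sdouble i n) (ltn_ord i)).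
Definition ord_half n (j : 'I_n.*2) : 'I_n := Ordinal (etrans (ltn_half_double j n) (ltn_ord j)).

Lemma ord_double_half n (j : 'I_n.*2) :
  j = if odd j then ord_Sdouble (ord_half j) else ord_double (ord_half j).
Proof. by apply: val_inj; rewrite (fun_if val) /=; have := odd_double_half j; case: odd. Qed.

Section U8.
Variables (F : fieldType) (L : fieldExtType F) (u : L).
Hypothesis u_notin_F : u \notin 1%VS.

Definition span1u : {vspace L} := (1 + <[u]>)%VS.

Lemma mem1_span1u : 1 \in span1u.
Proof. exact: subvP (addvSl _ _) _ (memv_line 1). Qed.

Lemma scale1Du_eq0 (a b : F) : a *: 1 + b *: u = 0 -> a = 0 /\ b = 0.
Proof.
move=> abu0; have b0 : b = 0.
  apply: contraNeq u_notin_F => b_neq0; apply/vlineP; exists (- (a / b)).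
  apply: (scalerI b_neq0); rewrite scalerA mulrN mulrCA mulfV // mulr1 scaleNr.
  by apply/eqP; rewrite -addr_eq0 addrC abu0.
by move: abu0; rewrite b0 scale0r addr0 => /eqP; rewrite scaler_eq0 oner_eq0 orbF => /eqP.
Qed.

Lemma dim_span1u : \dim span1u = 2%N.
Proof.
have : free [:: u; 1] by rewrite free_cons span_seq1 u_notin_F seq1_free oner_eq0.
by rewrite /free span_cons span_seq1 addvC => /eqP.
Qed.

Lemma span1u_mul_nz (dimL : (\dim {:L} <= 3)%N) (c : L) :
  exists y, [&& y \in span1u, y != 0 & c * y \in span1u].
Proof.
have [-> | c0] := eqVneq c 0.
  by exists 1; rewrite mul0r mem0v oner_eq0 mem1_span1u.
pose W := (span1u :&: span1u * <[c^-1]>)%VS.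
have W0 : W != 0%VS.
  rewrite -dimv_eq0 -lt0n /W; have := dimv_sum_cap span1u (span1u * <[c^-1]>).
  rewrite dim_cosetv ?invr_eq0 // dim_span1u.
  have := dimvS (subvf (span1u + span1u * <[c^-1]>)%VS); lia.
exists (vpick W); rewrite vpick0 W0 /=.
have /memv_capP[-> /memv_cosetP[z z1u ->]] := memv_pick W.
by rewrite mulrCA mulfV // mulr1.
Qed.

Lemma gen8_double (i : 'I_4) : gen8 u (ord_double i) = coordv i 1.
Proof. by apply/ffunP=> j; rewrite !ffunE /= doubleK odd_double. Qed.

Lemma gen8_Sdouble (i : 'I_4) : gen8 u (ord_Sdouble i) = coordv i u.
Proof. by apply/ffunP=> j; rewrite !ffunE /= uphalf_double odd_double. Qed.

Lemma coordv_U8 i x : x \in span1u -> coordv i x \in U8 u.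
Proof.
case/memv_addP=> _ /vlineP[a ->] [_ /vlineP[b ->] ->].
rewrite linearD !linearZ /= -gen8_double -gen8_Sdouble.
by rewrite memvD ?memvZ ?memv_span ?map_f ?mem_enum.
Qed.

Lemma sum_gen8 (c : 'I_8 -> F) (i : 'I_4) :
  (\sum_j c j *: gen8 u j) i = c (ord_double i) *: 1 + c (ord_Sdouble i) *: u.
Proof.
rewrite sum_ffunE (bigD1 (ord_double i)) // (bigD1 (ord_Sdouble i)) /=; last first.
  by rewrite -val_eqE /=; lia.
rewrite big1 ?addr0 => [|j /andP[]]; first by rewrite gen8_double gen8_Sdouble !ffunE !eqxx.
rewrite -!val_eqE /= !ffunE; case: ifP => [/eqP ->|_]; last by rewrite scaler0.
have := odd_double_half j; lia.
Qed.

Lemma dim_U8 : \dim (U8 u) = 8%N.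
Proof.
pose T := [tuple of map (gen8 u) (ord_tuple 8)].
suff /eqP : free T by rewrite size_tuple.
apply/freeP=> c cT0 j.
have /(congr1 (fun v : vecL L 4 => v (@ord_half 4 j))) : \sum_i c i *: gen8 u i = 0.
  by rewrite -[RHS]cT0; apply: eq_bigr => i _; rewrite -tnth_nth tnth_map tnth_ord_tuple.
rewrite sum_gen8 ffunE => /scale1Du_eq0[c2j0 c2j10].
by rewrite (@ord_double_half 4 j); case: odd.
Qed.

Lemma is_system_U8 : is_system 8 (U8 u).
Proof.
split=> [|w]; first exact: dim_U8.
by apply: Lspan_coordv1 => i; rewrite coordv_U8 ?mem1_span1u.
Qed.

Lemma cutting_U8 : (\dim {:L} <= 3)%N -> cutting (U8 u).
Proof. by move=> dimL; apply: cutting_coordv coordv_U8 (span1u_mul_nz dimL). Qed.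

End U8.

Theorem proposition3p13 (F : finFieldType) (L : fieldExtType F)
  (hL : \dim {:L} = 3%N) (u : L) (hu : u \notin 1%VS) :
  is_system 8 (U8 u) /\ cutting (U8 u).
Proof. exact: conj (is_system_U8 hu) (cutting_U8 hu (eq_leq hL)). Qed.
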